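(* Let $A=\{1,\dots,k\}$ and $M\le A^A$ a monoid. If a binary operation $h:A^2\to A$ satisfies $h\in(\overline{M})^{*}$, in particular if $h\in M^{*}$, then the unary map $x\mapsto h(x,x)$ belongs to $\overline{M}$.
   Context: A translation of a binary $h$ is a unary map $x\mapsto h(a,x)$ or $x\mapsto h(x,a)$ for some fixed $a\in A$; more generally for $n$-ary $f$ translations are $x\mapsto f(a_1,\dots,a_{i-1},x,a_{i+1},\dots,a_n)$; $\mathrm{trl}(f)$ is the set of translations ($\{f\}$ for unary $f$), and $N^*:=\{f\mid\mathrm{trl}(f)\subseteq N\}$ for $N\subseteq A^A$. The u-closure $\overline M$ is the intersection of all monoids $N$ with $M\subseteq N\le A^A$ such that $N^*$ is a clone. *)

(* The base set A = {1,...,k} is modelled by 'I_k = {0,...,k-1}. *)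
From mathcomp Require Import all_boot.
Set Implicit Arguments. Unset Strict Implicit. Unset Printing Implicit Defensive.

Definition op (k n : nat) := {ffun {ffun 'I_n -> 'I_k} -> 'I_k}.

Definition umap (k : nat) := {ffun 'I_k -> 'I_k}.

Definition is_monoid k (N : umap k -> Prop) : Prop :=
  N [ffun x => x] /\ forall f g, N f -> N g -> N [ffun x => f (g x)].

Definition transl k n (f : op k n) (i : 'I_n) (a : {ffun 'I_n -> 'I_k}) : umap k :=
  [ffun x => f [ffun j => if j == i then x else a j]].

Definition Fstar k (N : umap k -> Prop) (n : nat) (f : op k n) : Prop :=
  (0 < n) /\ forall i a, N (transl f i a).

Definition is_clone k (C : forall n, op k n -> Prop) : Prop :=
  (forall n (f : op k n), C n f -> 0 < n) /\
  (forall n (i : 'I_n), C n [ffun x : {ffun 'I_n -> 'I_k} => x i]) /\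
  (forall n m (f : op k n) (g : 'I_n -> op k m), 0 < m ->
     C n f -> (forall i, C m (g i)) ->
     C m [ffun x : {ffun 'I_m -> 'I_k} => f [ffun i => g i x]]).

Definition ubar k (M : umap k -> Prop) : umap k -> Prop :=
  fun g => forall N : umap k -> Prop,
    is_monoid N -> (forall f, M f -> N f) -> is_clone (Fstar N) -> N g.

Definition diag k (h : op k 2) : umap k := [ffun x => h [ffun _ => x]].

From mathcomp Require Import all_boot.
Set Implicit Arguments. Unset Strict Implicit. Unset Printing Implicit Defensive.

(* If N is one of the monoids whose intersection is the u-closure, then h lies
   in the clone N^*, hence so does the unary operation h(x, x) obtained by
   substituting the same projection twice; the only translation of a unary
   operation is itself, so h(x, x) lies in N. *)

Lemma ubar_sub k (M N : umap k -> Prop) :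
  is_monoid N -> (forall f, M f -> N f) -> is_clone (Fstar N) ->
  forall f, ubar M f -> N f.
Proof. by move=> monoN sMN cloneN f /(_ N monoN sMN cloneN). Qed.

Lemma Fstar_sub k (N N' : umap k -> Prop) n (f : op k n) :
  (forall g, N g -> N' g) -> Fstar N f -> Fstar N' f.
Proof. by move=> sNN' [n_gt0 trlN]; split=> // i a; apply/sNN'/trlN. Qed.

Definition collapse k n (f : op k n) : op k 1 :=
  [ffun x : {ffun 'I_1 -> 'I_k} => f [ffun=> x ord0]].

Lemma clone_collapse k (C : forall n, op k n -> Prop) n (f : op k n) :
  is_clone C -> C n f -> C 1 (collapse f).
Proof.
move=> [_ [Cproj Ccomp]] Cf.
have := Ccomp n 1 f (fun=> [ffun x : {ffun 'I_1 -> 'I_k} => x ord0]) isT Cf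
  (fun=> Cproj 1 ord0).
by congr (C 1); apply/ffunP=> x; rewrite !ffunE.
Qed.

Definition unop k (f : op k 1) : umap k := [ffun x => f [ffun=> x]].

(* For k = 0 there is no tuple [a] to translate by, but then A^A is the
   singleton containing the identity. *)
Lemma Fstar1_mem k (N : umap k -> Prop) (f : op k 1) :
  is_monoid N -> Fstar N f -> N (unop f).
Proof.
case: k N f => [|k] N f [idN _] [_ trlN].
  by have -> : unop f = [ffun x => x] by apply/ffunP=> -[].
have := trlN ord0 [ffun=> ord0].
congr N; apply/ffunP=> x; rewrite !ffunE; congr (f _).
by apply/ffunP=> i; rewrite !ord1 !ffunE.
Qed.

Lemma diag_unop k (h : op k 2) : diag h = unop (collapse h).
Proof. by apply/ffunP=> x; rewrite !ffunE. Qed.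

Theorem corollary3p10 (k : nat) (M : umap k -> Prop) (h : op k 2) :
  is_monoid M ->
  (Fstar (ubar M) h \/ Fstar M h) ->
  ubar M (diag h).
Proof.
move=> _ hstar N monoN sMN cloneN.
have hN : Fstar N h.
  by case: hstar; apply: Fstar_sub => // f; apply: ubar_sub.
by rewrite diag_unop; apply: Fstar1_mem => //; apply: clone_collapse hN.
Qed.
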